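(* For every sufficiently large integer $n$ (in particular whenever $2ne^{-n/80}+n^{\sqrt n}2^{-(n-1)}+n^{n/7+1}2^{-n^2/20}<1$) there exists a tournament $F_0$ on $n$ vertices such that: (I) every vertex of $F_0$ has out-degree at most $2n/3$ and in-degree at most $2n/3$; (II) there are no disjoint sets $A_1,A_2\subseteq V(F_0)$ with $|A_1|=|A_2|=\lceil\sqrt n\,\rceil$ such that $(a_1,a_2)$ is an arc of $F_0$ for all $a_1\in A_1$, $a_2\in A_2$; (III) for every $S\subseteq V(F_0)$ with $|S|\ge \frac{2n}{13}-\sqrt n$, the induced sub-tournament $F_0[S]$ contains a directed cycle.
   Context: A tournament is a loopless digraph in which every pair of distinct vertices is joined by exactly one arc. For $S\subseteq V(F_0)$, $F_0[S]$ is the induced sub-digraph on $S$. *)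

From Stdlib Require Import Reals.

Local Open Scope R_scope.
Definition size_condition (n : nat) : Prop :=
  (2 * INR n * exp (- (INR n / 80))
   + Rpower (INR n) (sqrt (INR n)) * Rpower 2 (- (INR n - 1))
   + Rpower (INR n) (INR n / 7 + 1) * Rpower 2 (- (INR n * INR n / 20)) < 1)%R.
Local Close Scope R_scope.

From mathcomp Require Import all_boot.
Set Implicit Arguments. Unset Strict Implicit. Unset Printing Implicit Defensive.

(* A tournament on vertex set 'I_n: loopless, and each pair of distinct
   vertices joined by exactly one arc.  [F x y] means (x,y) is an arc. *)
Definition is_tournament (n : nat) (F : rel 'I_n) : Prop :=
  (forall x, ~~ F x x) /\
  (forall x y, x != y -> (F x y || F y x) && ~~ (F x y && F y x)).

Definition outdeg (n : nat) (F : rel 'I_n) (x : 'I_n) : nat := #|[set y | F x y]|.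
Definition indeg (n : nat) (F : rel 'I_n) (x : 'I_n) : nat := #|[set y | F y x]|.

Definition ceil_sqrt (n : nat) : nat := Nat.sqrt_up n.

Definition has_dicycle_in (n : nat) (F : rel 'I_n) (S : {set 'I_n}) : Prop :=
  exists s : seq 'I_n, [/\ s != [::], uniq s, all (fun v => v \in S) s & cycle F s].

(* Orient each pair of a complete graph on n vertices by a fair coin.  An
   exponential-moment count shows that with probability < 1/2 some vertex has
   out- or in-degree above 2n/3, and a union bound over the at most n^(2s)
   pairs of disjoint s-sets, s = ceil(sqrt n), shows that with probability
   < 1/2 some such pair has all its arcs from the first set to the second; so
   some tournament satisfies (I) and (II).  Property (III) follows from (II): a
   sub-tournament without directed cycles is transitive, and when it has at
   least 2s vertices, ordering them by in-degree, the s lowest dominate the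
   next s.  The size condition forces n >= 481, which is enough both for the
   counting estimates and for 2n/13 - sqrt n >= 2s. *)

From Stdlib Require Import Reals Lra Lia Classical.
From mathcomp Require Import all_boot zify.

Set Implicit Arguments. Unset Strict Implicit. Unset Printing Implicit Defensive.

Lemma prod_nat_if_in (T : finType) (E : {set T}) a b :
  \prod_(e : T) (if e \in E then a else b) = a ^ #|E| * b ^ #|~: E|.
Proof.
rewrite (bigID (mem E)) /= (eq_bigr (fun=> a)) => [|e ->] //.
rewrite [X in _ * X](eq_bigr (fun=> b)) => [|e /negbTE ->] //.
by rewrite !prod_nat_const; congr (_ * _ ^ _); apply: eq_card => e; rewrite !inE.
Qed.

(* Markov's inequality for a product weight: summed over all [f], the weights
   [\prod_e c e (f e)] add up to the right-hand side. *)
Lemma card_mul_le_weight (T : finType) (c : T -> bool -> nat)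
    (B : {set {ffun T -> bool}}) w :
  (forall f, f \in B -> w <= \prod_(e : T) c e (f e)) ->
  #|B| * w <= \prod_(e : T) (c e true + c e false).
Proof.
move=> B_heavy.
have -> : \prod_(e : T) (c e true + c e false) =
          \sum_(f : {ffun T -> bool}) \prod_(e : T) c e (f e).
  by rewrite -bigA_distr_bigA; apply: eq_bigr => e _; rewrite big_bool.
rewrite -sum_nat_const (leq_trans (leq_sum _ B_heavy)) //.
by rewrite [leqRHS](bigID (mem B)) leq_addr.
Qed.

Lemma card_bigcup_le (I T : finType) (P : pred I) (F : I -> {set T}) :
  #|\bigcup_(i | P i) F i| <= \sum_(i | P i) #|F i|.
Proof.
elim/big_rec2: _ => [|i m U _ le_Um]; first by rewrite cards0.
by rewrite (leq_trans (leq_card_setU _ _).1) ?leq_add2l.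
Qed.

Lemma bin_le_exp n k : 'C(n, k) <= n ^ k.
Proof.
apply: leq_trans (leq_pmulr _ (fact_gt0 k)) _; rewrite bin_ffact.
elim: k => [|k IHk] //; rewrite ffactnSr expnSr; exact: leq_mul IHk (leq_subr _ _).
Qed.

Definition orientation n := {ffun 'I_n * 'I_n -> bool}.

(* Only the coordinates [(x, y)] with [x < y] are read: [f (x, y)] orients the
   pair {x, y} from [x] to [y].  The other coordinates multiply every count
   below by the same power of 2. *)
Definition orient n (f : orientation n) : rel 'I_n :=
  fun x y => if x < y then f (x, y) else if y < x then ~~ f (y, x) else false.

Definition slot n (x y : 'I_n) : 'I_n * 'I_n := if x < y then (x, y) else (y, x).

Section Orientation.
Variables (n : nat) (f : orientation n).

Lemma orient_irr x : orient f x x = false.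
Proof. by rewrite /orient ltnn. Qed.

Lemma orient_swap x y : x != y -> orient f y x = ~~ orient f x y.
Proof.
rewrite /orient => neq_xy; case: ltngtP => // [_|eq_xy]; first by rewrite negbK.
by rewrite (val_inj eq_xy) eqxx in neq_xy.
Qed.

Lemma orient_slot x y : x != y ->
  orient f x y = (f (slot x y) == ((slot x y).1 == x)).
Proof.
rewrite /orient /slot => neq_xy; case: ltngtP => [_|_|eq_xy] /=.
- by rewrite eqxx eqb_id.
- by rewrite [y == x]eq_sym (negbTE neq_xy) eqbF_neg.
- by rewrite (val_inj eq_xy) eqxx in neq_xy.
Qed.

Lemma orient_dir_slot (out : bool) x y : x != y ->
  (if out then orient f x y else orient f y x) =
  (f (slot x y) == (((slot x y).1 == x) == out)).
Proof.
move=> neq_xy; case: out; first by rewrite orient_slot // eqb_id.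
by rewrite orient_swap // orient_slot //; case: (f _); case: (_ == x).
Qed.

Lemma orient_tournament : is_tournament (orient f).
Proof.
split=> [x|x y /orient_swap ->]; first by rewrite orient_irr.
by case: (orient f x y).
Qed.

End Orientation.

Lemma slot_inj n (x : 'I_n) : injective (slot x).
Proof.
move=> y y'; rewrite /slot; do 2 case: ltnP => ?.
all: by case=> *; subst => //; apply: val_inj; lia.
Qed.

Definition heavy_at n t (x : 'I_n) (out : bool) : {set orientation n} :=
  [set f | t <= #|[set y | if out then orient f x y else orient f y x]|].

(* The weight doubles on each of the n - 1 pairs at [x] oriented out of
   (resp. into) [x]: an exponential moment of the degree. *)
Lemma card_heavy_at n t (x : 'I_n) out :
  #|heavy_at t x out| * 2 ^ (t + n.-1) <= 3 ^ n.-1 * 2 ^ (n * n).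
Proof.
set E := slot x @: [set~ x].
pose toward (e : 'I_n * 'I_n) := (e.1 == x) == out.
pose c e (j : bool) := if e \in E then (if j == toward e then 2 else 1) else 1.
have card_E : #|E| = n.-1 by rewrite card_imset ?cardsC1 ?card_ord //; exact: slot_inj.
have weight_ge f : f \in heavy_at t x out -> 2 ^ t <= \prod_e c e (f e).
  rewrite inE => le_t_deg; set Z := [set e in E | f e == toward e].
  have -> : \prod_e c e (f e) = \prod_e (if e \in Z then 2 else 1).
    by apply: eq_bigr => e _; rewrite /c inE; case: (e \in E); case: (f e == _).
  rewrite prod_nat_if_in exp1n muln1 leq_exp2l // (leq_trans le_t_deg) //.
  rewrite -(card_imset _ (@slot_inj n x)); apply/subset_leq_card/subsetP.
  move=> e /imsetP[y]; rewrite inE => arc_xy ->.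
  have neq_xy : x != y by apply: contraTneq arc_xy => <-; rewrite orient_irr if_same.
  by rewrite inE imset_f ?inE 1?(eq_sym y) //= /toward -orient_dir_slot.
have := card_mul_le_weight weight_ge.
have -> : \prod_e (c e true + c e false) = \prod_e (if e \in E then 3 else 2).
  by apply: eq_bigr => e _; rewrite /c; case: (e \in E); case: (toward e).
rewrite prod_nat_if_in [#|~: E|]cardsCs setCK card_prod card_ord card_E => le_weight.
rewrite expnD mulnA (leq_trans (leq_mul le_weight (leqnn _))) //.
by rewrite -mulnA -expnD subnK //; nia.
Qed.

Definition complete_from n (A1 A2 : {set 'I_n}) : {set orientation n} :=
  [set f | [forall a1 in A1, forall a2 in A2, orient f a1 a2]].

Lemma card_complete_from n (A1 A2 : {set 'I_n}) : [disjoint A1 & A2] ->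
  #|complete_from A1 A2| * 2 ^ (#|A1| * #|A2|) <= 2 ^ (n * n).
Proof.
move=> dis.
have neq a1 a2 : a1 \in A1 -> a2 \in A2 -> a1 != a2.
  by move=> A1a1; apply: contraTneq => <-; rewrite (disjointFr dis A1a1).
set E := [set slot p.1 p.2 | p in setX A1 A2].
pose c e (j : bool) := if e \in E then nat_of_bool (j == (e.1 \in A1)) else 1.
have card_E : #|E| = #|A1| * #|A2|.
  rewrite card_in_imset ?cardsX // => -[a1 a2] [b1 b2].
  rewrite !inE /= => /andP[A1a1 A2a2] /andP[A1b1 A2b2].
  rewrite /slot; do 2 case: ltnP => _; case=> *; subst => //.
  1-2: by rewrite (disjointFr dis A1a1) in A2b2.
have weight_ge f : f \in complete_from A1 A2 -> 1 <= \prod_e c e (f e).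
  rewrite inE => /forallP all_arcs; rewrite big1 // => e _; rewrite /c.
  case: ifP => // /imsetP [[a1 a2]]; rewrite inE /= => /andP[A1a1 A2a2] ->.
  have /forallP/(_ a2) := implyP (all_arcs a1) A1a1.
  rewrite A2a2 /= orient_slot ?neq // => /eqP->.
  rewrite /slot; case: ltnP => _ /=; first by rewrite eqxx A1a1.
  by rewrite (disjointFl dis A2a2) [a2 == a1]eq_sym (negbTE (neq _ _ A1a1 A2a2)).
have := card_mul_le_weight weight_ge.
have -> : \prod_e (c e true + c e false) = \prod_e (if e \in E then 1 else 2).
  by apply: eq_bigr => e _; rewrite /c; case: (e \in E); case: (e.1 \in A1).
rewrite prod_nat_if_in exp1n mul1n muln1 [#|~: E|]cardsCs setCK card_prod card_ord.
move=> le_weight; rewrite -card_E (leq_trans (leq_mul le_weight (leqnn _))) //.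
by rewrite -expnD subnK // (leq_trans (max_card E)) // card_prod card_ord.
Qed.

Definition disjoint_pairs n s : {set {set 'I_n} * {set 'I_n}} :=
  [set p : {set 'I_n} * {set 'I_n} |
     [&& [disjoint p.1 & p.2], #|p.1| == s & #|p.2| == s]].

Lemma card_disjoint_pairs n s : #|disjoint_pairs n s| <= n ^ (2 * s).
Proof.
pose Ds := [set A : {set 'I_n} | #|A| == s].
apply: (@leq_trans #|setX Ds Ds|).
  by apply/subset_leq_card/subsetP => p; rewrite !inE => /and3P[_ -> ->].
by rewrite cardsX card_draws card_ord mul2n -addnn expnD leq_mul ?bin_le_exp.
Qed.

Lemma exp2_gt_linear j : 20 <= j -> 5000 * j < 2 ^ j.
Proof.
move=> le20j; rewrite -(subnKC le20j) expnD.
have -> : 2 ^ 20 = 1024 * 1024 by rewrite -(expnD 2 10 10).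
by have := ltn_expl (j - 20) (isT : 1 < 2); lia.
Qed.

(* [3 ^ m <= 81 * 2 ^ (8 * (m %/ 5))] since [3 ^ 5 <= 2 ^ 8]; the remaining
   power of 2 in [2 ^ (t + m)] beats the linear factor. *)
Lemma degree_tail_lt n : 481 <= n ->
  4 * n * 3 ^ n.-1 < 2 ^ (((2 * n) %/ 3).+1 + n.-1).
Proof.
move=> n_ge; set m := n.-1; set t := ((2 * n) %/ 3).+1.
set q := m %/ 5; set r := m %% 5.
have def_m : m = q * 5 + r by rewrite /q /r -divn_eq.
have r_lt : r < 5 by rewrite /r ltn_mod.
have pow3_le : 3 ^ m <= 81 * 2 ^ (8 * q).
  rewrite def_m expnD mulnC (mulnC q 5) (expnM 3 5 q) (expnM 2 8 q).
  apply: leq_mul; first by rewrite (leq_trans (leq_pexp2l _ (_ : r <= 4))) //; lia.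
  by case: q {def_m} => [|q] //; rewrite leq_exp2r.
set j := t + m - 8 * q.
have def_tm : t + m = 8 * q + j by rewrite /j subnKC //; rewrite /m /t /q; lia.
have j_ge : 20 <= j by rewrite /j /m /t /q; lia.
have j_lin : 324 * n <= 5000 * j by rewrite /j /m /t /q; lia.
rewrite def_tm expnD.
apply: (@leq_ltn_trans (324 * n * 2 ^ (8 * q))).
  by move: pow3_le; set A := 3 ^ m; set B := 2 ^ (8 * q); nia.
by rewrite mulnC ltn_mul2l expn_gt0 /= (leq_ltn_trans j_lin (exp2_gt_linear j_ge)).
Qed.

Lemma pow4_le_exp2 s : 18 <= s -> s ^ 4 <= 2 ^ s.-1.
Proof.
move=> s_ge; rewrite -(subnKC s_ge); elim: (s - 18) => [|k IHk]; first by [].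
rewrite addnS expnS /= (leq_trans _ (leq_mul (leqnn 2) IHk)) //.
rewrite !expnS expn0; nia.
Qed.

Lemma pair_tail_lt s n : 18 <= s -> n <= s * s -> 2 * n ^ (2 * s) < 2 ^ (s * s).
Proof.
move=> s_ge n_le; apply: (@leq_ltn_trans (2 * 2 ^ (s.-1 * s))).
  rewrite leq_mul2l /=; apply: (@leq_trans ((s * s) ^ (2 * s))).
    by rewrite leq_exp2r //; lia.
  rewrite mulnn -!expnM mulnA [X in X <= _]expnM [X in _ <= X]expnM.
  by rewrite leq_exp2r; [exact: pow4_le_exp2 | lia].
by rewrite -expnS ltn_exp2l //; nia.
Qed.

Definition unbalanced n : {set orientation n} :=
  \bigcup_(p : 'I_n * bool) heavy_at ((2 * n) %/ 3).+1 p.1 p.2.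

Lemma card_unbalanced n : 481 <= n -> 2 * #|unbalanced n| < 2 ^ (n * n).
Proof.
move=> n_ge; set t := ((2 * n) %/ 3).+1.
have card_le : #|unbalanced n| * 2 ^ (t + n.-1) <= 2 * n * (3 ^ n.-1 * 2 ^ (n * n)).
  apply: leq_trans (leq_mul (card_bigcup_le _ _) (leqnn _)) _.
  rewrite big_distrl (leq_trans (leq_sum _ (fun p _ => card_heavy_at t p.1 p.2))) //.
  by rewrite sum_nat_const card_prod card_ord card_bool (mulnC n).
have := degree_tail_lt n_ge; rewrite -/t -(ltn_pmul2r (expn_gt0 2 (n * n))) => tail_lt.
rewrite -(ltn_pmul2r (expn_gt0 2 (t + n.-1))).
rewrite -mulnA; apply: leq_ltn_trans (leq_mul (leqnn 2) card_le) _.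
by move: tail_lt; nia.
Qed.

Definition has_complete_pair n s : {set orientation n} :=
  \bigcup_(p in disjoint_pairs n s) complete_from p.1 p.2.

Lemma card_has_complete_pair n s : 18 <= s -> n <= s * s ->
  2 * #|has_complete_pair n s| < 2 ^ (n * n).
Proof.
move=> s_ge n_le.
have card_le : #|has_complete_pair n s| * 2 ^ (s * s) <= n ^ (2 * s) * 2 ^ (n * n).
  apply: leq_trans (leq_mul (card_bigcup_le _ _) (leqnn _)) _.
  rewrite big_distrl (@leq_trans (\sum_(p in disjoint_pairs n s) 2 ^ (n * n))) //.
    apply: leq_sum => p; rewrite inE => /and3P[dis /eqP card1 /eqP card2].
    by have := card_complete_from dis; rewrite card1 card2.
  by rewrite sum_nat_const leq_mul2r card_disjoint_pairs orbT.
have := pair_tail_lt s_ge n_le; rewrite -(ltn_pmul2r (expn_gt0 2 (n * n))) => tail_lt.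
rewrite -(ltn_pmul2r (expn_gt0 2 (s * s))).
rewrite -mulnA; apply: leq_ltn_trans (leq_mul (leqnn 2) card_le) _.
by move: tail_lt; nia.
Qed.

Lemma exists_sparse_orientation n s : 481 <= n -> 18 <= s -> n <= s * s ->
  exists f : orientation n,
    (forall x, 3 * outdeg (orient f) x <= 2 * n /\ 3 * indeg (orient f) x <= 2 * n) /\
    (forall A1 A2 : {set 'I_n}, [disjoint A1 & A2] -> #|A1| = s -> #|A2| = s ->
       ~ (forall a1 a2, a1 \in A1 -> a2 \in A2 -> orient f a1 a2)).
Proof.
move=> n_ge s_ge n_le.
have : 0 < #|~: (unbalanced n :|: has_complete_pair n s)|.
  rewrite cardsCs setCK card_ffun card_bool card_prod card_ord subn_gt0.
  rewrite (leq_ltn_trans (leq_card_setU _ _).1) //.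
  by move: (card_unbalanced n_ge) (card_has_complete_pair s_ge n_le); lia.
case/card_gt0P => f; rewrite !inE negb_or => /andP[balanced no_complete].
exists f; split=> [x | A1 A2 dis card1 card2 all_arcs].
  have deg_le out :
      3 * #|[set y | if out then orient f x y else orient f y x]| <= 2 * n.
    have : f \notin heavy_at ((2 * n) %/ 3).+1 x out.
      by apply: contra balanced => heavy; apply/bigcupP; exists (x, out).
    by rewrite inE -ltnNge ltnS; lia.
  exact: conj (deg_le true) (deg_le false).
apply: (negP no_complete); apply/bigcupP; exists (A1, A2).
  by rewrite inE dis card1 card2 !eqxx.
rewrite inE; apply/forallP => a1; apply/implyP => A1a1.
by apply/forallP => a2; apply/implyP; exact: all_arcs.
Qed.

Section DicycleFree.
Variables (n : nat) (F : rel 'I_n) (S : {set 'I_n}).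
Hypotheses (F_tour : is_tournament F) (F_acyclic : ~ has_dicycle_in F S).

Let F_irr x : F x x = false. Proof. by apply: negbTE; case: F_tour. Qed.

Let F_neq u v : F u v -> u != v.
Proof. by apply: contraTneq => ->; rewrite F_irr. Qed.

Let F_total u v : u != v -> F u v || F v u.
Proof. by case: F_tour => _ /[apply] /andP[]. Qed.

Let F_asym u v : F u v -> F v u = false.
Proof.
by move=> Fuv; case: F_tour => _ /(_ u v (F_neq Fuv)) /andP[_]; rewrite Fuv => /negbTE.
Qed.

(* Otherwise [u -> v -> w -> u] is a directed 3-cycle. *)
Lemma dicycle_free_trans u v w : u \in S -> v \in S -> w \in S ->
  F u v -> F v w -> F u w.
Proof.
move=> Su Sv Sw Fuv Fvw; apply/negPn/negP => nFuw.
have nuw : u != w by apply: contraTneq Fvw => <-; rewrite F_asym.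
have Fwu : F w u by move: (F_total nuw); rewrite (negbTE nFuw).
apply: F_acyclic; exists [:: u; v; w]; split => //=.
- by rewrite !inE negb_or (F_neq Fuv) nuw (F_neq Fvw).
- by rewrite Su Sv Sw.
- by rewrite Fuv Fvw Fwu.
Qed.

Definition indeg_in v := #|[set u in S | F u v]|.

Lemma indeg_in_lt u v : u \in S -> v \in S -> F u v -> indeg_in u < indeg_in v.
Proof.
move=> Su Sv Fuv; apply: proper_card; apply/properP; split.
  apply/subsetP => w; rewrite !inE => /andP[Sw Fwu].
  by rewrite Sw (dicycle_free_trans Sw Su Sv).
by exists u; rewrite !inE ?Su ?Fuv ?F_irr.
Qed.

Lemma indeg_in_lt_card v : v \in S -> indeg_in v < #|S|.
Proof.
move=> Sv; apply: proper_card; apply/properP; split.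
  by apply/subsetP => w; rewrite inE => /andP[].
by exists v; rewrite // inE F_irr andbF.
Qed.

Lemma indeg_in_inj : {in S &, injective indeg_in}.
Proof.
move=> u v Su Sv eq_uv; apply/eqP; apply: contraFT (ltnn (indeg_in v)) => /F_total.
by case/orP => [/(indeg_in_lt Su Sv) | /(indeg_in_lt Sv Su)]; rewrite eq_uv.
Qed.

Lemma perm_indeg_in : perm_eq [seq indeg_in v | v <- enum S] (iota 0 #|S|).
Proof.
have uniq_indeg : uniq [seq indeg_in v | v <- enum S].
  rewrite map_inj_in_uniq ?enum_uniq // => u v.
  by rewrite !mem_enum; exact: indeg_in_inj.
apply: uniq_perm => //; first exact: iota_uniq.
apply: (uniq_min_size uniq_indeg _ _).2 => [i /mapP[v]|].
  by rewrite mem_enum mem_iota => Sv ->; rewrite indeg_in_lt_card.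
by rewrite size_map size_iota cardE.
Qed.

Lemma card_indeg_in_lt k : k <= #|S| -> #|[set v in S | indeg_in v < k]| = k.
Proof.
move=> le_kS; rewrite -sum1_card.
rewrite (eq_bigl (fun v => (v \in S) && (indeg_in v < k))) => [|v]; last by rewrite inE.
rewrite -big_enum_cond.
have -> : \sum_(v <- enum S | indeg_in v < k) 1 =
          \sum_(i <- map indeg_in (enum S) | i < k) 1 by rewrite big_map.
rewrite (perm_big _ perm_indeg_in).
by rewrite -big_filter (filter_iota_ltn 0 le_kS) sum1_size size_iota.
Qed.

Lemma dicycle_free_dominating_pair s : 2 * s <= #|S| ->
  exists A1 A2 : {set 'I_n}, [/\ [disjoint A1 & A2], #|A1| = s, #|A2| = s &
     forall a1 a2, a1 \in A1 -> a2 \in A2 -> F a1 a2].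
Proof.
move=> le_2s_S; pose L k := [set v in S | indeg_in v < k].
have L_sub : L s \subset L (s + s).
  by apply/subsetP => v; rewrite !inE => /andP[-> /leq_trans ->] //; rewrite leq_addr.
exists (L s), (L (s + s) :\: L s); split.
- by rewrite disjoint_sym; apply/setDidPl; rewrite setDDl setUid.
- by rewrite card_indeg_in_lt //; lia.
- by rewrite cardsD (setIidPr L_sub) !card_indeg_in_lt ?addnK //; lia.
move=> a1 a2; rewrite !inE => /andP[Sa1 lt1] /andP[notL /andP[Sa2 _]].
have le2 : s <= indeg_in a2 by move: notL; rewrite Sa2 -leqNgt.
have neq : a1 != a2 by apply: contraTneq le2 => <-; rewrite -ltnNge.
by case/orP: (F_total neq) => // /(indeg_in_lt Sa2 Sa1); lia.
Qed.

End DicycleFree.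

Lemma ceil_sqrt_spec n : 0 < n ->
  (ceil_sqrt n).-1 * (ceil_sqrt n).-1 < n <= ceil_sqrt n * ceil_sqrt n.
Proof. by move=> /ltP n_gt0; have := Nat.sqrt_up_spec n n_gt0; rewrite /ceil_sqrt; lia. Qed.

Section SizeCondition.
Local Open Scope R_scope.

Lemma exp_INR_le_pow3 k : exp (INR k) <= 3 ^ k.
Proof.
induction k as [|k IHk]; [simpl; rewrite exp_0; lra|].
rewrite S_INR exp_plus; simpl.
pose proof exp_le_3; pose proof (exp_pos (INR k)); pose proof (exp_pos 1).
rewrite Rmult_comm; apply Rmult_le_compat; lra.
Qed.

Lemma exp_div80_le n : (1 <= n <= 480)%N -> exp (INR n / 80) <= 2 * INR n.
Proof.
intros n_range.
destruct (Nat.eq_dec n 1) as [->|n_ne1].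
{ simpl INR; pose proof ln_lt_2; apply Rle_trans with (exp (ln 2)).
  - apply Rlt_le, exp_increasing; lra.
  - rewrite exp_ln; lra. }
assert (k_ex : exists k,
  (1 <= k <= 6)%N /\ (n <= 80 * k)%coq_nat /\ (80 * k <= n + 79)%coq_nat)
  by (exists ((n + 79) %/ 80); lia).
destruct k_ex as [k [k_range [n_le n_ge]]].
assert (n_ge2 : (2 <= n)%coq_nat) by lia.
pose proof (le_INR _ _ n_le) as n_le'; pose proof (le_INR _ _ n_ge) as n_ge'.
pose proof (le_INR _ _ n_ge2) as n_ge2'.
rewrite mult_INR (INR_IZR_INZ 80) in n_le'.
rewrite mult_INR plus_INR (INR_IZR_INZ 80) (INR_IZR_INZ 79) in n_ge'.
rewrite (INR_IZR_INZ 2) in n_ge2'; simpl in n_le', n_ge', n_ge2'.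
apply Rle_trans with (exp (INR k)).
{ assert (le_k : INR n / 80 <= INR k) by lra.
  destruct (Rle_lt_or_eq_dec _ _ le_k) as [lt_k|eq_k].
  - apply Rlt_le, exp_increasing, lt_k.
  - rewrite eq_k; lra. }
apply (Rle_trans _ _ _ (exp_INR_le_pow3 k)).
destruct k as [|[|[|[|[|[|[|k]]]]]]]; try lia; simpl in *; lra.
Qed.

(* For 1 <= n <= 480 the first summand alone is at least 1, and for n = 0 the
   second one is [Rpower 0 0 * Rpower 2 1 = 2]. *)
Lemma size_condition_ge481 n : size_condition n -> (481 <= n)%N.
Proof.
unfold size_condition; intros cond.
destruct (Nat.le_gt_cases 481 n) as [n_ge|n_lt]; [by apply/leP|exfalso].
assert (Rpower_pos : forall x y, 0 < Rpower x y) by (intros; apply exp_pos).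
destruct n as [|n'].
- simpl in cond; rewrite sqrt_0 in cond.
  replace (- (0 - 1)) with 1 in cond by lra.
  assert (e0 : Rpower 0 0 = 1) by (unfold Rpower; rewrite Rmult_0_l; apply exp_0).
  rewrite e0 Rpower_1 in cond; [|lra].
  pose proof (Rpower_pos 0 (0 / 7 + 1)); pose proof (Rpower_pos 2 (- (0 * 0 / 20))); nra.
- set (n := S n') in *.
  assert (exp_le := exp_div80_le (n := n) ltac:(lia)).
  assert (exp_gt := exp_pos (INR n / 80)).
  rewrite exp_Ropp in cond.
  assert (first_ge1 : 1 <= 2 * INR n * / exp (INR n / 80)).
  { apply (Rmult_le_reg_r (exp (INR n / 80))); [lra|].
    rewrite Rmult_assoc Rinv_l; lra. }
  pose proof (Rpower_pos (INR n) (sqrt (INR n))).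
  pose proof (Rpower_pos 2 (- (INR n - 1))).
  pose proof (Rpower_pos (INR n) (INR n / 7 + 1)).
  pose proof (Rpower_pos 2 (- (INR n * INR n / 20))).
  nra.
Qed.

(* With r = sqrt n >= 21: 2s <= 2r + 2 <= 2 r^2 / 13 - r. *)
Lemma double_ceil_sqrt_le n m : (481 <= n)%N ->
  INR m >= 2 * INR n / 13 - sqrt (INR n) -> (2 * ceil_sqrt n <= m)%N.
Proof.
intros n_ge m_ge.
assert (s_lt : (Nat.pred (ceil_sqrt n) * Nat.pred (ceil_sqrt n) < n)%coq_nat).
{ apply/ltP; case/andP: (ceil_sqrt_spec (n := n) ltac:(lia)) => lt _; exact lt. }
apply/leP; apply INR_le.
set (r := sqrt (INR n)) in *; set (s := ceil_sqrt n) in *.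
assert (r_ge0 : 0 <= r) by apply sqrt_pos.
assert (r_sq : r * r = INR n) by (apply sqrt_sqrt, pos_INR).
assert (n_ge' : 481 <= INR n).
{ pose proof (le_INR 481 n ltac:(lia)) as h; rewrite INR_IZR_INZ in h; exact h. }
assert (r_ge : 21 <= r) by nra.
pose proof (lt_INR _ _ s_lt) as s_lt'; rewrite mult_INR in s_lt'.
pose proof (pos_INR (Nat.pred s)).
assert (s_lt_r : INR (Nat.pred s) < r) by nra.
rewrite mult_INR; destruct s as [|s'].
- simpl; pose proof (pos_INR m); lra.
- rewrite -r_sq in m_ge; rewrite (S_INR s'); simpl Nat.pred in s_lt_r.
  assert ((r - 21) * (2 * r + 3) >= 0) by nra.
  simpl; lra.
Qed.

End SizeCondition.

Theorem lemma4p1 (n : nat) : size_condition n ->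
  exists F : rel 'I_n,
    [/\ is_tournament F,
        (* (I) *)
        (forall x, 3 * outdeg F x <= 2 * n /\ 3 * indeg F x <= 2 * n),
        (* (II) *)
        (forall A1 A2 : {set 'I_n},
            [disjoint A1 & A2] -> #|A1| = ceil_sqrt n -> #|A2| = ceil_sqrt n ->
            ~ (forall a1 a2, a1 \in A1 -> a2 \in A2 -> F a1 a2))
      & (* (III) *)
        (forall S : {set 'I_n},
            Rge (INR #|S|) (Rminus (Rdiv (Rmult 2 (INR n)) 13) (sqrt (INR n))) -> has_dicycle_in F S)].
Proof.
move=> /size_condition_ge481 n_ge.
have /andP[_ n_le] := ceil_sqrt_spec (leq_trans (isT : 0 < 481) n_ge).
have s_ge : 18 <= ceil_sqrt n by nia.
have [f [deg_le no_complete]] := exists_sparse_orientation n_ge s_ge n_le.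
have f_tour := orient_tournament f.
exists (orient f); split=> // S S_large; apply: NNPP => acyclic.
have [A1 [A2 [dis card1 card2 arcs]]] :=
  dicycle_free_dominating_pair f_tour acyclic (double_ceil_sqrt_le n_ge S_large).
exact: no_complete dis card1 card2 arcs.
Qed.
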